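(* Let $F$ be a discrete time regulatory network on $[0,1]^d$ satisfying coordinatewise injectivity. Then for each $i\in\{1,\dots,d\}$ and each integer $t\ge1$, any two distinct members of $\mathcal Q_i^t$ are disjoint.
   Context: $K\in[0,1]^{d\times d}$ with $\sum_iK_{i,j}=1$ for each $j$; $s\in\{-1,0,1\}^{d\times d}$, $T\in[0,1]^{d\times d}$ with $s_{i,j}=0$ iff $K_{i,j}=0$ and $T_{i,j}=0$ iff $K_{i,j}=0$; $a\in[0,1]$; $H(x)=0$ for $x\le0$, $1$ otherwise; $F(x)_j=ax_j+(1-a)\sum_iK_{i,j}H(s_{i,j}(x_i-T_{i,j}))$. Coordinatewise injectivity: for each $j$, with $\mathcal F_j=\{x\mapsto ax+(1-a)\sum_i\epsilon_iK_{i,j}:\epsilon\in\{0,1\}^d\}$, distinct $f,f'\in\mathcal F_j$ have $f([0,1])\cap f'([0,1])=\emptyset$. Base partition: $\mathcal P_i$ is the set of nonempty level sets of $u\mapsto(H(s_{i,k}(u-T_{i,k})))_{k=1}^d$ on $[0,1]$, $\mathcal P=\{\prod_iI_i:I_i\in\mathcal P_i\}$; $\mathcal P^1=\mathcal P$, $\mathcal P^{t+1}=\{F^{-1}(\mathbf I)\cap\mathbf J\ne\emptyset:\mathbf I\in\mathcal P^t,\mathbf J\in\mathcal P\}$. Set $\mathcal Q^t=\{F^{t-1}(\mathbf I):\mathbf I\in\mathcal P^t\}$ and $\mathcal Q_i^t=\{\Pi_i\mathbf J:\mathbf J\in\mathcal Q^t\}$, where $\Pi_i$ is the projection onto the $i$-th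 coordinate. *)

From HB Require Import structures.
From mathcomp Require Import all_boot all_order all_algebra.
From mathcomp Require Import all_classical all_reals.
Set Implicit Arguments. Unset Strict Implicit. Unset Printing Implicit Defensive.
Import Order.TTheory GRing.Theory Num.Theory.
Local Open Scope ring_scope.
Local Open Scope classical_set_scope.

Section RegNet.
Variables (R : realType) (d : nat).
Notation vec := ('I_d -> R).

Definition Heav (x : R) : R := if x <= 0 then 0 else 1.

Definition unitI : set R := [set u | 0 <= u <= 1].
Definition cube : set vec := [set x | forall i, unitI (x i)].

Definition regnet_data (K : 'I_d -> 'I_d -> R) (s : 'I_d -> 'I_d -> int)
  (T : 'I_d -> 'I_d -> R) (a : R) : Prop :=
  (forall i j, unitI (K i j)) /\
  (forall j, \sum_(i < d) K i j = 1) /\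
  (forall i j, s i j = -1 \/ s i j = 0 \/ s i j = 1) /\
  (forall i j, s i j = 0 <-> K i j = 0) /\
  (forall i j, unitI (T i j)) /\
  (forall i j, T i j = 0 <-> K i j = 0) /\
  unitI a.

Definition netF (K : 'I_d -> 'I_d -> R) (s : 'I_d -> 'I_d -> int)
  (T : 'I_d -> 'I_d -> R) (a : R) (x : vec) : vec :=
  fun j => a * x j + (1 - a) *
    \sum_(i < d) K i j * Heav ((s i j)%:~R * (x i - T i j)).

Definition coord_injective (K : 'I_d -> 'I_d -> R) (a : R) : Prop :=
  forall (j : 'I_d) (eps eps' : 'I_d -> bool),
    let f := fun x : R => a * x + (1 - a) * \sum_(i < d) (eps i)%:R * K i j in
    let f' := fun x : R => a * x + (1 - a) * \sum_(i < d) (eps' i)%:R * K i j in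
    f <> f' -> f @` unitI `&` f' @` unitI = set0.

(* base partition of coordinate i: nonempty level sets on [0,1] of
   u |-> (H(s_{i,k}(u - T_{i,k})))_k *)
Definition sigvec (s : 'I_d -> 'I_d -> int) (T : 'I_d -> 'I_d -> R)
  (i : 'I_d) (u : R) : 'I_d -> R :=
  fun k => Heav ((s i k)%:~R * (u - T i k)).

Definition basePi (s : 'I_d -> 'I_d -> int) (T : 'I_d -> 'I_d -> R)
  (i : 'I_d) : set (set R) :=
  [set I | exists2 u0, unitI u0 &
     I = [set u | unitI u /\ sigvec s T i u = sigvec s T i u0]].

Definition baseP (s : 'I_d -> 'I_d -> int) (T : 'I_d -> 'I_d -> R)
  : set (set vec) :=
  [set B | exists I : 'I_d -> set R,
     (forall i, basePi s T i (I i)) /\ B = [set x | forall i, I i (x i)]].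

(* P^{n+1}, n >= 0 *)
Fixpoint Pdeep (K : 'I_d -> 'I_d -> R) (s : 'I_d -> 'I_d -> int)
  (T : 'I_d -> 'I_d -> R) (a : R) (n : nat) : set (set vec) :=
  match n with
  | 0 => baseP s T
  | n'.+1 => [set C | exists I, exists J,
       [/\ Pdeep K s T a n' I, baseP s T J,
           C = (netF K s T a) @^-1` I `&` J & C !=set0]]
  end.

Definition Ppart K s T a (t : nat) : set (set vec) := Pdeep K s T a t.-1.

Definition Qpart K s T a (t : nat) : set (set vec) :=
  [set J | exists2 I, Ppart K s T a t I & J = iter t.-1 (netF K s T a) @` I].

Definition Qpart_i K s T a (t : nat) (i : 'I_d) : set (set R) :=
  [set A | exists2 J, Qpart K s T a t J & A = (fun x : vec => x i) @` J].

End RegNet.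

From HB Require Import structures.
From mathcomp Require Import all_boot all_order all_algebra.
From mathcomp Require Import all_classical all_reals.
Import Order.TTheory GRing.Theory Num.Theory.
Local Open Scope ring_scope.
Local Open Scope classical_set_scope.
Set Implicit Arguments. Unset Strict Implicit. Unset Printing Implicit Defensive.

(* A cell C of P^(n+1) is a class of points x whose iterates F^0 x, ..., F^n x
   lie in prescribed base cells.  Along such orbits every coordinate evolves
   independently, F(x)_j = a x_j + (1 - a) D_j, where the drive D_j depends
   only on the base cell of x.  Coordinatewise injectivity determines the
   drive from a single coordinate of F(x), so when a <> 0 an equality
   F^n(y)_i = F^n(y')_i with y in C, y' in C' propagates back to
   F^k(y)_i = F^k(y')_i for all k <= n.  Then replacing the i-th coordinate
   of y' by that of any x in C gives a point of C' whose n-th iterate has the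
   same i-th coordinate as F^n(x).  When a = 0 and n > 0, F^n is constant on
   C.  Hence two projections that meet are equal. *)

Section RegulatoryNetwork.
Variables (R : realType) (d : nat).
Variables (K : 'I_d -> 'I_d -> R) (s : 'I_d -> 'I_d -> int).
Variables (T : 'I_d -> 'I_d -> R) (a : R).
Local Notation vec := ('I_d -> R).
Local Notation F := (netF K s T a).

Definition same_cell (z w : vec) : Prop :=
  forall j, [/\ unitI (z j), unitI (w j) & sigvec s T j (z j) = sigvec s T j (w j)].

Lemma same_cell_sym z w : same_cell z w -> same_cell w z.
Proof. by move=> H j; have [? ? ->] := H j. Qed.

Lemma same_cell_trans z u w : same_cell z u -> same_cell u w -> same_cell z w.
Proof. by move=> H1 H2 j; have [? _ ->] := H1 j; have [_ ? ->] := H2 j. Qed.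

Lemma same_cell_cube z w : same_cell z w -> cube z /\ cube w.
Proof. by move=> H; split=> j; have [] := H j. Qed.

Definition same_itinerary (n : nat) (x y : vec) : Prop :=
  forall k, (k <= n)%N -> same_cell (iter k F x) (iter k F y).

Lemma same_itinerary_sym n x y : same_itinerary n x y -> same_itinerary n y x.
Proof. by move=> H k Hk; apply/same_cell_sym/H. Qed.

Lemma same_itinerary_trans n x y z :
  same_itinerary n x y -> same_itinerary n y z -> same_itinerary n x z.
Proof. by move=> H1 H2 k Hk; exact: same_cell_trans (H1 k Hk) (H2 k Hk). Qed.

Lemma baseP_same_cell (B : set vec) :
  baseP s T B -> exists2 x0, B x0 & forall x, B x <-> same_cell x0 x.
Proof.
case=> I [HI ->].
have [u0 Hu0] : {u0 : vec & forall i, unitI (u0 i) /\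
    I i = [set u | unitI u /\ sigvec s T i u = sigvec s T i (u0 i)]}.
  apply: (@choice _ _ (fun i u0 => unitI u0 /\
    I i = [set u | unitI u /\ sigvec s T i u = sigvec s T i u0])).
  by move=> i; case: (HI i) => u0 h1 h2; exists u0.
exists u0 => [i|x]; first by have [? ->] := Hu0 i.
split=> Hx j; have [? Ij] := Hu0 j.
- by move: (Hx j); rewrite Ij => -[].
- by rewrite Ij; have [] := Hx j.
Qed.

Lemma Pdeep_same_itinerary_class n (C : set vec) :
  Pdeep K s T a n C ->
  exists2 x0, C x0 & forall x, C x <-> same_itinerary n x0 x.
Proof.
elim: n C => [|n IHn] C /=.
  move=> /baseP_same_cell [x0 Cx0 HC]; exists x0 => // x; rewrite HC.
  by split=> [H [|] | /(_ 0%N isT)].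
case=> I [J [/IHn [y0 _ HI] /baseP_same_cell [z0 _ HJ] -> [x0 [Ix0 Jx0]]]].
have Hx0 := (HI _).1 Ix0; have Hz0 := (HJ _).1 Jx0.
exists x0 => // x; split.
- case=> /HI Hx /HJ Hzx [|k] Hk; first exact: same_cell_trans (same_cell_sym Hz0) Hzx.
  by rewrite !iterSr; exact: same_cell_trans (same_cell_sym (Hx0 k Hk)) (Hx k Hk).
- move=> Hx; split.
    apply/HI => k Hk; have := Hx k.+1 Hk; rewrite !iterSr.
    exact: same_cell_trans (Hx0 k Hk).
  by apply/HJ; exact: same_cell_trans Hz0 (Hx 0%N isT).
Qed.

Lemma Pdeep_same_itinerary n C x y :
  Pdeep K s T a n C -> C x -> C y -> same_itinerary n x y.
Proof.
move=> /Pdeep_same_itinerary_class [x0 _ HC] /HC Hx /HC Hy.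
exact: same_itinerary_trans (same_itinerary_sym Hx) Hy.
Qed.

Lemma Pdeep_same_itinerary_closed n C x y :
  Pdeep K s T a n C -> C x -> same_itinerary n x y -> C y.
Proof.
move=> /Pdeep_same_itinerary_class [x0 _ HC] /HC Hx Hxy.
by apply/HC; exact: same_itinerary_trans Hx Hxy.
Qed.

Definition drive (x : vec) (j : 'I_d) : R :=
  \sum_(k < d) K k j * Heav ((s k j)%:~R * (x k - T k j)).

Lemma netFE x j : F x j = a * x j + (1 - a) * drive x j.
Proof. by []. Qed.

Lemma drive_same_cell z w j : same_cell z w -> drive z j = drive w j.
Proof.
move=> H; apply: eq_bigr => k _; have [_ _ /(congr1 (fun f => f j))] := H k.
by rewrite /sigvec => ->.
Qed.

Lemma drive_indicator_sum x j :
  drive x j = \sum_(k < d) (~~ ((s k j)%:~R * (x k - T k j) <= 0))%:R * K k j.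
Proof.
by apply: eq_bigr => k _; rewrite mulrC /Heav; case: (_ <= 0); rewrite ?mulr0n ?mulr1n.
Qed.

Lemma netF_a0_same_cell x y : a = 0 -> same_cell x y -> F x = F y.
Proof.
by move=> a0 Hxy; apply: funext => j; rewrite !netFE (drive_same_cell j Hxy) a0 !mul0r.
Qed.

Lemma netF_coord_eq_drive z w j : coord_injective K a ->
  unitI (z j) -> unitI (w j) -> F z j = F w j ->
  (1 - a) * drive z j = (1 - a) * drive w j.
Proof.
move=> Hci Hz Hw E.
pose f (eps : 'I_d -> bool) u := a * u + (1 - a) * \sum_(k < d) (eps k)%:R * K k j.
pose ez k := ~~ ((s k j)%:~R * (z k - T k j) <= 0).
pose ew k := ~~ ((s k j)%:~R * (w k - T k j) <= 0).
have {}E : f ez (z j) = f ew (w j) by rewrite /f -!drive_indicator_sum -!netFE.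
rewrite !drive_indicator_sum.
(* F z j and F w j are values on [0, 1] of the members f ez and f ew of the
   family F_j; since their images meet, the two members coincide. *)
have [fE|fN] := pselect (f ez = f ew).
  by have := congr1 (fun g => g 0) fE; rewrite /f !mulr0 !add0r.
have := Hci j ez ew; cbv zeta => /(_ fN) /seteqP [/(_ (f ez (z j))) meet _].
by exfalso; apply: meet; split; [exists (z j) | exists (w j)].
Qed.

Lemma iter_coord_eq_backward n y y' i : coord_injective K a -> a != 0 ->
  (forall k, (k <= n)%N -> cube (iter k F y) /\ cube (iter k F y')) ->
  iter n F y i = iter n F y' i ->
  forall k, (k <= n)%N -> iter k F y i = iter k F y' i.
Proof.
move=> Hci a_neq0; elim: n => [|n IHn] Hcube En k.
  by rewrite leqn0 => /eqP ->.
rewrite leq_eqVlt => /orP [/eqP -> // | Hk].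
apply: IHn => // [m Hm | ]; first exact/Hcube/leqW.
have [Hy Hy'] := Hcube n (leqnSn n).
have Dn := netF_coord_eq_drive Hci (Hy i) (Hy' i) En.
by move: En; rewrite !iterS !netFE Dn => /addIr /(mulfI a_neq0).
Qed.

Definition splice (i : 'I_d) (x y : vec) : vec :=
  fun j => if j == i then x j else y j.

Lemma same_cell_splice i x y : unitI (x i) -> cube y ->
  sigvec s T i (x i) = sigvec s T i (y i) -> same_cell y (splice i x y).
Proof. by move=> Hx Hy Hsig j; rewrite /splice; case: eqP => [->|_]. Qed.

Lemma netF_splice i x y : same_cell y (splice i x y) ->
  (1 - a) * drive x i = (1 - a) * drive y i ->
  F (splice i x y) = splice i (F x) (F y).
Proof.
move=> Hc Hd; apply: funext => j.
rewrite /splice netFE -(drive_same_cell j Hc) !netFE.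
by case: eqP => [->|_]; rewrite ?Hd.
Qed.

Lemma iter_splice n i x y :
  (forall k, (k <= n)%N -> [/\ unitI (iter k F x i), cube (iter k F y) &
     sigvec s T i (iter k F x i) = sigvec s T i (iter k F y i)]) ->
  (forall k, (k < n)%N ->
     (1 - a) * drive (iter k F x) i = (1 - a) * drive (iter k F y) i) ->
  forall k, (k <= n)%N -> iter k F (splice i x y) = splice i (iter k F x) (iter k F y).
Proof.
move=> Hcell Hdrive; elim=> [//|k IHk] Hk.
have [Hx Hy Hsig] := Hcell k (ltnW Hk).
rewrite !iterS IHk ?(ltnW Hk) // netF_splice ?Hdrive //.
exact: same_cell_splice.
Qed.

Lemma Pdeep_splice_transfer n C' x y y' i : coord_injective K a ->
  Pdeep K s T a n C' -> C' y' -> same_itinerary n x y ->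
  (forall k, (k <= n)%N -> iter k F y i = iter k F y' i) ->
  exists2 x', C' x' & iter n F x' i = iter n F x i.
Proof.
move=> Hci PC' Cy' xy Eyy'.
have y'y' := Pdeep_same_itinerary PC' Cy' Cy'.
have Hcell k : (k <= n)%N -> [/\ unitI (iter k F x i), cube (iter k F y') &
    sigvec s T i (iter k F x i) = sigvec s T i (iter k F y' i)].
  move=> Hk; have [Hx _ Hsig] := xy k Hk i.
  by split=> //; [exact: (same_cell_cube (y'y' k Hk)).1 | rewrite Hsig Eyy'].
have Hdrive k : (k < n)%N ->
    (1 - a) * drive (iter k F x) i = (1 - a) * drive (iter k F y') i.
  move=> Hk; have Hk' := ltnW Hk; rewrite (drive_same_cell i (xy k Hk')).
  have [_ Hyk _] := xy k Hk' i; have [_ Hy'k _] := y'y' k Hk' i.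
  exact: netF_coord_eq_drive Hci Hyk Hy'k (Eyy' k.+1 Hk).
have Hsplice := iter_splice Hcell Hdrive.
exists (splice i x y'); last by rewrite Hsplice // /splice eqxx.
apply: Pdeep_same_itinerary_closed PC' Cy' _ => k Hk.
have [Hx Hy Hsig] := Hcell k Hk.
by rewrite Hsplice //; exact: same_cell_splice.
Qed.

Lemma Pdeep_coord_image_sub n C C' y y' i : coord_injective K a ->
  Pdeep K s T a n C -> Pdeep K s T a n C' -> C y -> C' y' ->
  iter n F y i = iter n F y' i ->
  (fun x => iter n F x i) @` C `<=` (fun x => iter n F x i) @` C'.
Proof.
move=> Hci PC PC' Cy Cy' Eyy' _ [x Cx <-].
have xy := Pdeep_same_itinerary PC Cx Cy.
have [a0 | a_neq0] := eqVneq a 0; last first.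
  have y'y' := Pdeep_same_itinerary PC' Cy' Cy'.
  apply: (Pdeep_splice_transfer Hci PC' Cy' xy).
  apply: (iter_coord_eq_backward Hci a_neq0 _ Eyy') => k Hk.
  exact: conj (same_cell_cube (xy k Hk)).2 (same_cell_cube (y'y' k Hk)).1.
move: PC PC' xy Eyy'; case: n => [|m] PC PC' xy Eyy'.
  by apply: (Pdeep_splice_transfer Hci PC' Cy' xy) => k; rewrite leqn0 => /eqP ->.
by exists y' => //; rewrite -Eyy' !iterS (netF_a0_same_cell a0 (xy m (leqnSn m))).
Qed.

End RegulatoryNetwork.

Theorem mainTheorem6 (R : realType) (d : nat)
  (K : 'I_d -> 'I_d -> R) (s : 'I_d -> 'I_d -> int)
  (T : 'I_d -> 'I_d -> R) (a : R) :
  regnet_data K s T a ->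
  coord_injective K a ->
  forall (i : 'I_d) (t : nat), (1 <= t)%N ->
  forall A B : set R,
    Qpart_i K s T a t i A -> Qpart_i K s T a t i B ->
    A <> B -> A `&` B = set0.
Proof.
move=> _ Hci i t _ A B [J [C PC ->] ->] [J' [C' PC' ->] ->] AB.
rewrite -subset0 => u [[v [y Cy <-] Ey] [v' [y' Cy' <-] Ey']].
apply: AB; rewrite !image_comp eqEsubset; split.
- exact: Pdeep_coord_image_sub Hci PC PC' Cy Cy' (etrans Ey (esym Ey')).
- exact: Pdeep_coord_image_sub Hci PC' PC Cy' Cy (etrans Ey' (esym Ey)).
Qed.
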